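(* With the notation of the context, let $i\in\{1,\dots,n\}$ and let $k$ be an integer with $n\leqslant k<\ell(P_i)$. Then $\mathrm{qpd}_{A_{n,m}}(L(i,k))=\mathrm{pd}_{A_{n,m}}(L(i,k))=2$.
   Context: Let $K$ be a field, $n\geqslant2$, $Q$ the cyclic quiver with vertices $1,\dots,n$ and arrows $\alpha_i:i\to i+1$ ($1\leqslant i\leqslant n-1$), $\alpha_n:n\to1$, paths composed right to left. Let $\rho_1=\alpha_n\cdots\alpha_1$ and $\rho_i=\alpha_{i-1}\cdots\alpha_1\alpha_n\cdots\alpha_i$ for $2\leqslant i\leqslant n$. Fix $1\leqslant m\leqslant n$ and $\Delta=\{\lambda_1<\cdots<\lambda_m\}\subseteq\{1,\dots,n\}$, and let $A_{n,m}=KQ/\langle\rho_\lambda:\lambda\in\Delta\rangle$, with Jacobson radical $J$. Modules are finitely generated left modules. $P_i=A_{n,m}e_i$ for the idempotent $e_i$ at vertex $i$, $S_i=P_i/Je_i$, $\ell(M)=\min\{s\geqslant1:J^sM=0\}$ the Loewy length, and $L(i,k)$ the indecomposable module with top $S_i$ and Loewy length $k$ (namely $P_i/J^kP_i$). Complexes are indexed homologically; $\sup X_\bullet=\sup\{i:X_i\neq0\}$, $\inf X_\bullet=\inf\{i:X_i\ne0\}$, $\mathrm{hsup}\,X_\bullet=\sup\{i:H_i(X_\bullet)\neq0\}$. A quasi-projective resolution of $M$ is a complex $P_\bullet$ of projective modules with $\inf P_\bullet>-\infty$ such that for every $j\geqslant\inf P_\bullet$ there is $n_j\geqslant0$ with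 $H_j(P_\bullet)\cong M^{n_j}$, not all $n_j$ zero; finite if $\sup P_\bullet<\infty$. For $M\ne0$, $\mathrm{qpd}\,M=\inf\{\sup P_\bullet-\mathrm{hsup}\,P_\bullet\}$ over finite quasi-projective resolutions ($\infty$ if none). *)

From HB Require Import structures.
From mathcomp Require Import all_boot all_order all_algebra.
Set Implicit Arguments. Unset Strict Implicit. Unset Printing Implicit Defensive.
Import GRing.Theory.
Local Open Scope ring_scope.

(* Vertices 1..n of the paper are 'I_n (vertex v+1 of the paper is v : 'I_n).
   Arrow alpha_v : v -> ordS v.  Row-vector convention: an element a of the
   algebra acts on v : 'rV_N as  v *m (mat a),  so mat (a b) = mat b *m mat a. *)

(* A finite-dimensional K-vector space K^rdim with matrices for the generators
   e_v (vertex idempotents) and alpha_v (arrows) of the path algebra. *)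
Record rep (K : fieldType) (n : nat) := Rep {
  rdim : nat;
  re : 'I_n -> 'M[K]_rdim;
  ra : 'I_n -> 'M[K]_rdim }.

Section Defs.
Variables (K : fieldType) (n : nat) (Delta : {set 'I_n}).
Implicit Types (M N P : rep K n).

Definition vtx (v : 'I_n) (t : nat) : 'I_n := iter t (@ordS n) v.

(* matrix of the path alpha_{v+t-1} ... alpha_{v+1} alpha_v (length t, from v) *)
Fixpoint pathm M (v : 'I_n) (t : nat) : 'M[K]_(rdim M) :=
  match t with
  | 0 => 1%:M
  | t'.+1 => ra M v *m pathm M (ordS v) t'
  end.

(* M is a left module over A_{n,m} = KQ / < rho_lambda : lambda in Delta >,
   i.e. a representation of the generators satisfying the defining relations
   of the path algebra KQ and the relations rho_lambda = 0. *)
Definition is_mod M : Prop :=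
  [/\ forall v, re M v *m re M v = re M v,
      forall v w, v != w -> re M v *m re M w = 0,
      \sum_v re M v = 1%:M,
      forall v, ra M v = re M v *m ra M v *m re M (ordS v) &
      forall lam, lam \in Delta -> pathm M lam n = 0].

Definition is_hom M N (F : 'M[K]_(rdim M, rdim N)) : Prop :=
  forall v, re M v *m F = F *m re N v /\ ra M v *m F = F *m ra N v.

Definition is_iso M N : Prop :=
  exists F : 'M[K]_(rdim M, rdim N), is_hom F /\ row_free F /\ row_full F.

Definition projective P : Prop :=
  is_mod P /\
  forall M N (g : 'M[K]_(rdim M, rdim N)) (f : 'M[K]_(rdim P, rdim N)),
    is_mod M -> is_mod N -> is_hom g -> row_full g -> is_hom f ->
    exists h : 'M[K]_(rdim P, rdim M), is_hom h /\ h *m g = f.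

Definition mpow M (r : nat) : rep K n :=
  @Rep K n (\sum_(j < r) rdim M)
    (fun v => @mxdiag K r (fun _ => rdim M) (fun _ => re M v))
    (fun v => @mxdiag K r (fun _ => rdim M) (fun _ => ra M v)).

(* Loewy length: least s >= 1 with J^s M = 0; J^s is spanned by the paths of
   length >= s, so J^s M = 0 iff every path of length s acts by zero. *)
Definition loewy_length M (l : nat) : Prop :=
  [/\ (1 <= l)%N, forall v, pathm M v l = 0 &
      forall s, (1 <= s < l)%N -> exists v, pathm M v s != 0].

(* Bounded-below complexes of modules, indexed (after a shift, harmless for
   sup - hsup) by nat:  cd t : X_{t+1} -> X_t. *)
Record cplx := Cplx {
  cm : nat -> rep K n;
  cd : forall t : nat, 'M[K]_(rdim (cm t.+1), rdim (cm t)) }.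

Definition proj_complex (C : cplx) : Prop :=
  [/\ forall t, projective (cm C t),
      forall t, is_hom (cd C t) &
      forall t, cd C t.+1 *m cd C t = 0].

Definition cycles (C : cplx) (t : nat) : 'M[K]_(rdim (cm C t)) :=
  match t as u return 'M[K]_(rdim (cm C u)) with
  | 0 => 1%:M
  | s.+1 => kermx (cd C s)
  end.
Definition bounds (C : cplx) (t : nat) := cd C t.

(* H_t(C) is isomorphic to N: a linear map on X_t which on Z_t is A-linear,
   maps Z_t onto N and has kernel B_t on Z_t, i.e. Z_t / B_t ~ N. *)
Definition homology_iso (C : cplx) (t : nat) N : Prop :=
  exists G : 'M[K]_(rdim (cm C t), rdim N),
  [/\ forall z : 'rV[K]_(rdim (cm C t)), (z <= cycles C t)%MS ->
        forall v, z *m re (cm C t) v *m G = z *m G *m re N v /\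
                  z *m ra (cm C t) v *m G = z *m G *m ra N v,
      row_full (cycles C t *m G) &
      forall z : 'rV[K]_(rdim (cm C t)), (z <= cycles C t)%MS ->
        (z *m G == 0) = (z <= bounds C t)%MS].

Definition homology_nonzero (C : cplx) (t : nat) : Prop :=
  ~~ (cycles C t <= bounds C t)%MS.

Definition is_sup (C : cplx) (s : nat) : Prop :=
  rdim (cm C s) != 0%N /\ forall t, (s < t)%N -> rdim (cm C t) = 0%N.
Definition is_hsup (C : cplx) (h : nat) : Prop :=
  homology_nonzero C h /\ forall t, (h < t)%N -> ~ homology_nonzero C t.

Definition fin_qpres M (C : cplx) : Prop :=
  [/\ proj_complex C, exists s, is_sup C s &
      exists nj : nat -> nat,
        (forall t, homology_iso C t (mpow M (nj t))) /\ exists t, nj t != 0%N].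

Definition qpd_value M (g : nat) : Prop :=
  exists C, fin_qpres M C /\ exists s h, [/\ is_sup C s, is_hsup C h & (g + h = s)%N].

Definition qpd_is M (q : nat) : Prop :=
  qpd_value M q /\ forall g, qpd_value M g -> (q <= g)%N.

Definition proj_res M (L : nat) : Prop :=
  exists C, [/\ proj_complex C, homology_iso C 0 M,
    forall t, (0 < t)%N -> ~ homology_nonzero C t &
    forall t, (L < t)%N -> rdim (cm C t) = 0%N].

Definition pd_is M (p : nat) : Prop :=
  proj_res M p /\ forall L, proj_res M L -> (p <= L)%N.

(* Uniserial module with basis b_0, ..., b_{len-1}, b_t at vertex vtx v t,
   alpha_{vtx v t} b_t = b_{t+1} (and b_len := 0): the module spanned by the
   paths of length < len starting at v. *)
Definition uniserial (v : 'I_n) (len : nat) : rep K n :=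
  @Rep K n len
    (fun w => \matrix_(a, b) (((a == b) && (vtx v a == w))%:R))
    (fun w => \matrix_(a, b) (((vtx v a == w) && (b == a.+1 :> nat))%:R)).

(* the path of length t from v lies in the (monomial) ideal generated by the
   rho_lambda iff it contains some rho_lambda as a subpath *)
Definition path_zero (v : 'I_n) (t : nat) : bool :=
  [exists p : 'I_t.+1, ((p + n <= t)%N && (vtx v p \in Delta))].

(* dim A e_v = number of nonzero paths starting at v (all paths of length
   >= 2n are zero when Delta is nonempty) *)
Definition dimP (v : 'I_n) : nat := #|[pred t : 'I_(2 * n) | ~~ path_zero v t]|.

(* P_v = A e_v  (basis: the nonzero paths from v) *)
Definition Pmod (v : 'I_n) : rep K n := uniserial v (dimP v).

(* L(v,k) = P_v / J^k P_v, for 1 <= k <= l(P_v) *)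
Definition Lmod (v : 'I_n) (k : nat) : rep K n := uniserial v k.

End Defs.

(* With l = l(P_i) and vertices counted mod n, the maps b_a |-> b_(k+a) and b_a |-> b_(l-k+a)
   give an exact complex 0 -> P_(i+l) -> P_(i+k) -> P_i -> L(i,k) -> 0, because
   l(P_(i+k)) = l - k + n and l(P_(i+l)) = n; hence pd and qpd are at most 2.
   Conversely, every projective module P, being a summand of a sum of P_v's, satisfies: alpha_u is
   injective on e_u P unless u + 1 lies in Delta, and an element of e_(v+1) P killed by a path
   shorter than l(P_(v+1)) lies in alpha_v P.  Suppose a complex of projectives has homology
   L(i,k)^r, r > 0, in degree h, with X_(h+2) = 0 and H_(h+1) = 0, so that d : X_(h+1) -> X_h is
   injective.  Lift the top of a copy of L(i,k) to a cycle z at i.  Then alpha^k z = d q, where q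
   is killed by the path of length l - k < l(P_(i+k)), so q = alpha q'; now alpha^(k-1) z - d q'
   is killed by the arrow at i + k - 1 while i + k is not in Delta (as n <= k < l), so
   alpha^(k-1) z is a boundary, a contradiction.  Thus sup - hsup >= 2 for every finite
   quasi-projective resolution, and pd >= 2. *)

From mathcomp Require Import all_boot all_order all_algebra.
From mathcomp Require Import zify.
Set Implicit Arguments. Unset Strict Implicit. Unset Printing Implicit Defensive.
Import GRing.Theory.
Local Open Scope ring_scope.

Section Vertices.
Variables (n : nat) (Delta : {set 'I_n}).
Implicit Types (v : 'I_n) (s t : nat).

Lemma vtxS v t : vtx v t.+1 = ordS (vtx v t).
Proof. by []. Qed.

Lemma vtxD v s t : vtx v (s + t) = vtx (vtx v s) t.
Proof. by rewrite /vtx addnC iterD. Qed.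

Lemma vtx_ordS v t : vtx (ordS v) t = vtx v t.+1.
Proof. by rewrite -addn1 addnC vtxD. Qed.

Lemma vtx_val v t : val (vtx v t) = ((v + t) %% n)%N.
Proof.
elim: t => [|t IH]; first by rewrite addn0 modn_small.
by rewrite vtxS /= IH addnS -addn1 modnDml addn1.
Qed.

Lemma vtxDn v t : vtx v (t + n) = vtx v t.
Proof. by apply: val_inj; rewrite !vtx_val addnA modnDr. Qed.

Lemma path_zeroP v t :
  reflect (exists p, (p + n <= t)%N /\ vtx v p \in Delta) (path_zero Delta v t).
Proof.
apply: (iffP existsP) => [[p /andP[pt pD]]|[p [pt pD]]]; first by exists p.
have p_lt : (p < t.+1)%N by rewrite ltnS (leq_trans (leq_addr n p)).
by exists (Ordinal p_lt); rewrite pt.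
Qed.

Lemma path_zero_mono v s t : (s <= t)%N -> path_zero Delta v s -> path_zero Delta v t.
Proof.
move=> st /path_zeroP[p [ps pD]]; apply/path_zeroP.
by exists p; rewrite (leq_trans ps st).
Qed.

Lemma path_zero_vtxD v s t : path_zero Delta (vtx v s) t -> path_zero Delta v (s + t).
Proof.
case/path_zeroP=> p [pt pD]; apply/path_zeroP; exists (s + p)%N.
by rewrite vtxD pD -addnA leq_add2l.
Qed.

Lemma vtx_path_zeroS v t :
  path_zero Delta v t.+1 -> ~~ path_zero Delta v t -> vtx v t.+1 \in Delta.
Proof.
case/path_zeroP=> p [pt pD] /path_zeroP no_p.
suff <- : (p + n)%N = t.+1 by rewrite vtxDn.
by apply/eqP; rewrite eqn_leq pt ltnNge; apply/negP => ptn; apply: no_p; exists p.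
Qed.

Hypothesis n_gt0 : (0 < n)%N.

Lemma path_zero0 v : ~~ path_zero Delta v 0.
Proof. by apply/path_zeroP => -[p [pn _]]; lia. Qed.

Lemma path_zero_n v : path_zero Delta v n = (v \in Delta).
Proof.
apply/path_zeroP/idP => [[p [pn pD]]|vD]; last by exists 0%N.
have p0 : p = 0%N by lia.
by rewrite p0 in pD.
Qed.

Lemma path_zero_small v t : (t < n)%N -> ~~ path_zero Delta v t.
Proof. by move=> tn; apply/path_zeroP => -[p [pt _]]; lia. Qed.

Hypothesis Delta_neq0 : Delta != set0.

(* (2 * n).-1 = (n - 1) + n, and some vertex of Delta is reached from v in fewer than n steps. *)
Lemma path_zero_bound v : path_zero Delta v (2 * n).-1.
Proof.
case/set0Pn: Delta_neq0 => lam lamD; apply/path_zeroP.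
exists ((lam + n - v) %% n)%N; split; first by have := ltn_pmod (lam + n - v) n_gt0; lia.
suff -> : vtx v ((lam + n - v) %% n) = lam by [].
apply: val_inj; rewrite vtx_val modnDmr.
have := ltn_ord v; have := ltn_ord lam => lam_lt v_lt.
have -> : (v + (lam + n - v) = lam + n)%N by lia.
by rewrite modnDr modn_small.
Qed.

Lemma ltn_dimP v t : (t < dimP Delta v)%N = ~~ path_zero Delta v t.
Proof.
pose D := ex_minn (ex_intro (path_zero Delta v) _ (path_zero_bound v)).
have DE s : path_zero Delta v s = (D <= s)%N.
  rewrite /D; case: ex_minnP => D' zD' D'min.
  by apply/idP/idP => [/D'min //|/path_zero_mono]; apply.
have D_le : (D <= 2 * n)%N by have := path_zero_bound v; rewrite DE; lia.
suff -> : dimP Delta v = D by rewrite DE -ltnNge.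
have widen_inj : injective (widen_ord D_le) by move=> a b /(congr1 val) /= /val_inj.
rewrite /dimP -[RHS](card_ord D) -(card_image widen_inj).
apply: eq_card => s; rewrite !inE DE -ltnNge.
apply/idP/imageP => [sD|[r _ ->]]; last by rewrite /= ltn_ord.
by exists (Ordinal sD) => //; apply: val_inj.
Qed.

Lemma path_zero_dimP v : path_zero Delta v (dimP Delta v).
Proof. by apply: contraT; rewrite -ltn_dimP ltnn. Qed.

Lemma dimP_gt0 v : (0 < dimP Delta v)%N.
Proof. by rewrite ltn_dimP path_zero0. Qed.

Lemma dimP_eq v t :
  ~~ path_zero Delta v t.-1 -> path_zero Delta v t -> dimP Delta v = t.
Proof.
move=> nz z; have t_gt0 : (0 < t)%N by case: t nz z => // _; rewrite (negbTE (path_zero0 v)).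
apply/eqP; rewrite eqn_leq leqNgt ltn_dimP z /=.
by rewrite -(prednK t_gt0) ltn_dimP.
Qed.

Lemma vtx_dimP_in v : vtx v (dimP Delta v) \in Delta.
Proof.
rewrite -(prednK (dimP_gt0 v)) vtx_path_zeroS //.
  by rewrite prednK ?path_zero_dimP ?dimP_gt0.
by rewrite -ltn_dimP prednK ?dimP_gt0.
Qed.

Lemma dimP_vtx_dimP v : dimP Delta (vtx v (dimP Delta v)) = n.
Proof. by apply: dimP_eq; rewrite ?path_zero_small ?prednK ?path_zero_n ?vtx_dimP_in //; lia. Qed.

Section PastFirstTurn.
Variables (v : 'I_n) (k : nat).
Hypothesis k_range : (n <= k < dimP Delta v)%N.

Lemma vtx_notin_Delta : vtx v k \notin Delta.
Proof.
have nk : (n <= k)%N by case/andP: k_range.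
apply/negP => kD; move: k_range; rewrite ltn_dimP => /andP[_ /negP]; apply.
by apply/path_zeroP; exists (k - n)%N; rewrite subnK // -(vtxDn v) subnK.
Qed.

Lemma dimP_vtx : dimP Delta (vtx v k) = (dimP Delta v - k + n)%N.
Proof.
have /andP[nk kl] := k_range.
apply: dimP_eq.
  apply/negP => z; have : path_zero Delta v (k - n + (dimP Delta v - k + n).-1).
    by apply: path_zero_vtxD; rewrite -(vtxDn v) subnK.
  by apply/negP; rewrite -ltn_dimP; lia.
apply/path_zeroP; exists (dimP Delta v - k)%N; split=> //.
by rewrite -vtxD subnKC ?vtx_dimP_in // ltnW.
Qed.

End PastFirstTurn.
End Vertices.

Section Modules.
Variables (K : fieldType) (n : nat) (Delta : {set 'I_n}).
Implicit Types (M N : rep K n) (v w : 'I_n).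

Lemma pathmS M v t : pathm M v t.+1 = pathm M v t *m ra M (vtx v t).
Proof.
elim: t v => [|t IH] v; first by rewrite /= mulmx1 mul1mx.
transitivity (ra M v *m pathm M (ordS v) t.+1); first by [].
by rewrite IH mulmxA vtx_ordS.
Qed.

Lemma pathmD M v s t : pathm M v (s + t) = pathm M v s *m pathm M (vtx v s) t.
Proof.
elim: s v => [|s IH] v; first by rewrite /= mul1mx.
by rewrite addSn /= IH mulmxA vtx_ordS.
Qed.

Lemma hom_pathm M N (F : 'M[K]_(rdim M, rdim N)) v t :
  is_hom F -> pathm M v t *m F = F *m pathm N v t.
Proof.
move=> homF; elim: t v => [|t IH] v; first by rewrite /= mul1mx mulmx1.
by rewrite /= -mulmxA IH !mulmxA (proj2 (homF v)).
Qed.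

Variable M : rep K n.
Hypothesis M_mod : is_mod Delta M.

Lemma re_idem v : re M v *m re M v = re M v.
Proof. by case: M_mod. Qed.

Lemma re_orth v w : v != w -> re M v *m re M w = 0.
Proof. by case: M_mod => _ orth _ _ _; apply: orth. Qed.

Lemma re_sum : \sum_v re M v = 1%:M.
Proof. by case: M_mod. Qed.

Lemma re_ra v : re M v *m ra M v = ra M v.
Proof. by case: M_mod => idem _ _ raE _; rewrite raE !mulmxA idem. Qed.

Lemma ra_re v : ra M v *m re M (ordS v) = ra M v.
Proof. by case: M_mod => idem _ _ raE _; rewrite raE -mulmxA idem. Qed.

Lemma pathm_zero v t : path_zero Delta v t -> pathm M v t = 0.
Proof.
case/path_zeroP=> p [pt pD]; rewrite -(subnKC pt) !pathmD.
by case: M_mod => _ _ _ _ /(_ _ pD) ->; rewrite mulmx0 mul0mx.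
Qed.

Lemma rv_re (x : 'rV[K]_(rdim M)) v w :
  x *m re M v = x -> x *m re M w = if v == w then x else 0.
Proof.
by move=> xv; case: eqP => [<- //|/eqP vw]; rewrite -xv -mulmxA re_orth ?mulmx0.
Qed.

Lemma rv_pathm_re (x : 'rV[K]_(rdim M)) v t :
  x *m re M v = x -> x *m pathm M v t *m re M (vtx v t) = x *m pathm M v t.
Proof.
by case: t => [|t] xv; rewrite ?mulmx1 // pathmS vtxS -!mulmxA ra_re.
Qed.

End Modules.

Section UniserialBasis.
Variable K : fieldType.

(* The basis vector b_t of a uniserial module of length len, with junk value 0 when len <= t. *)
Definition ubasis len t : 'rV[K]_len := \row_b ((b == t :> nat)%:R).

Lemma ubasis_ge len t : (len <= t)%N -> ubasis len t = 0.
Proof.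
move=> lent; apply/rowP => b; rewrite !mxE.
by case: eqP => // bt; have := ltn_ord b; rewrite bt ltnNge lent.
Qed.

Lemma ubasisE len (a : 'I_len) : ubasis len a = delta_mx 0 a.
Proof. by apply/rowP => b; rewrite !mxE. Qed.

Lemma ubasis_ext len m (A B : 'M[K]_(len, m)) :
  (forall a : 'I_len, ubasis len a *m A = ubasis len a *m B) -> A = B.
Proof. by move=> eqAB; apply/row_matrixP => a; rewrite !rowE -ubasisE eqAB. Qed.

Lemma ubasis_neq0 len t : (t < len)%N -> ubasis len t != 0.
Proof.
move=> tlen; apply/eqP => /rowP /(_ (Ordinal tlen)).
by rewrite !mxE eqxx => /eqP; rewrite oner_eq0.
Qed.

Lemma rv_ubasis len (x : 'rV[K]_len) : x = \sum_(a < len) x 0 a *: ubasis len a.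
Proof.
apply/rowP => b; rewrite summxE (bigD1 b) //= big1 => [|a /negbTE ab].
  by rewrite !mxE eqxx mulr1 addr0.
by rewrite !mxE (inj_eq val_inj) eq_sym ab mulr0.
Qed.

Variables (n : nat) (v : 'I_n) (len : nat).
Local Notation U := (uniserial K v len).

Lemma ubasis_re t w : ubasis len t *m re U w = (vtx v t == w)%:R *: ubasis len t.
Proof.
case: (ltnP t len) => [tlen|lent]; last by rewrite ubasis_ge // mul0mx scaler0.
rewrite -[t]/(nat_of_ord (Ordinal tlen)) ubasisE -rowE.
by apply/rowP => b; rewrite !mxE eqxx andTb [b == _]eq_sym mulrC -natrM mulnb.
Qed.

Lemma ubasis_ra t w : ubasis len t *m ra U w = (vtx v t == w)%:R *: ubasis len t.+1.
Proof.
case: (ltnP t len) => [tlen|lent]; last by rewrite !ubasis_ge ?mul0mx ?scaler0 // leqW.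
rewrite -[t in LHS]/(nat_of_ord (Ordinal tlen)) ubasisE -rowE.
by apply/rowP => b; rewrite !mxE -natrM mulnb.
Qed.

Lemma ubasis_pathm t s : ubasis len t *m pathm U (vtx v t) s = ubasis len (t + s).
Proof.
elim: s t => [|s IH] t; first by rewrite mulmx1 addn0.
by rewrite [pathm _ _ _]/= mulmxA ubasis_ra eqxx scale1r -vtxS IH addSnnS.
Qed.

Lemma ubasis_pathm_ne t s w : w != vtx v t -> ubasis len t *m pathm U w s.+1 = 0.
Proof.
by move=> wt; rewrite [pathm _ _ _]/= mulmxA ubasis_ra eq_sym (negbTE wt) scale0r mul0mx.
Qed.

Lemma uniserial_mod (Delta : {set 'I_n}) :
  (0 < n)%N -> Delta != set0 -> (len <= dimP Delta v)%N -> is_mod Delta U.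
Proof.
move=> n_gt0 Delta_neq0 len_le; split.
- move=> w; apply: ubasis_ext => a; rewrite mulmxA !ubasis_re -scalemxAl ubasis_re.
  by rewrite scalerA -natrM mulnb andbb.
- move=> w w' ww'; apply: ubasis_ext => a; rewrite mulmxA ubasis_re -scalemxAl ubasis_re.
  rewrite scalerA -natrM mulnb mulmx0.
  by case: eqP => [->|_]; rewrite ?(negbTE ww') scale0r.
- apply: ubasis_ext => a; rewrite mulmx_sumr mulmx1 (bigD1 (vtx v a)) //=.
  rewrite ubasis_re eqxx scale1r big1 ?addr0 // => w /negbTE wa.
  by rewrite ubasis_re eq_sym wa scale0r.
- move=> w; apply: ubasis_ext => a; rewrite !mulmxA ubasis_re -!scalemxAl ubasis_ra.
  rewrite -scalemxAl ubasis_re !scalerA -!natrM !mulnb andbb vtxS.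
  by case: eqP => [->|]; rewrite ?eqxx.
- move=> lam lamD; apply: ubasis_ext => a; rewrite mulmx0.
  have [lamE|lam_a] := eqVneq lam (vtx v a); last first.
    by have := ubasis_pathm_ne n.-1 lam_a; rewrite prednK.
  rewrite lamE ubasis_pathm ubasis_ge // (leq_trans len_le) // leqNgt ltn_dimP // negbK.
  by apply/path_zeroP; exists (nat_of_ord a); rewrite leqnn -lamE.
Qed.

End UniserialBasis.

Section UniserialCoefficients.
Variables (K : fieldType) (n : nat) (v : 'I_n) (len : nat).
Local Notation U := (uniserial K v len).
Implicit Types (x : 'rV[K]_len) (w : 'I_n).

Lemma re_coef x w (c : 'I_len) : (x *m re U w) 0 c = x 0 c * (vtx v c == w)%:R.
Proof.
rewrite mxE (bigD1 c) //= big1 => [|a /negbTE ac]; first by rewrite mxE eqxx addr0.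
by rewrite mxE ac mulr0.
Qed.

Lemma ra_coef x w (a b : 'I_len) :
  b = a.+1 :> nat -> (x *m ra U w) 0 b = x 0 a * (vtx v a == w)%:R.
Proof.
move=> ba; rewrite mxE (bigD1 a) //= big1 => [|c /negbTE ca].
  by rewrite mxE ba eqxx andbT addr0.
by rewrite mxE ba eqSS (inj_eq (@ord_inj _)) [a == _]eq_sym ca andbF mulr0.
Qed.

Lemma pathm_coef x w s (a b : 'I_len) :
  b = (a + s.+1)%N :> nat -> (x *m pathm U w s.+1) 0 b = x 0 a * (vtx v a == w)%:R.
Proof.
elim: s x w a => [|s IH] x w a ba; first by rewrite addn1 in ba; rewrite /= mulmx1 (ra_coef _ _ ba).
have a1_lt : (a.+1 < len)%N by rewrite (leq_trans _ (ltn_ord b)) // ba ltnS addnS leq_addr.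
rewrite -[pathm U w _]/(ra U w *m pathm U (ordS w) s.+1) mulmxA.
rewrite (IH _ _ (Ordinal a1_lt)) ?addSnnS //.
by rewrite (ra_coef _ _ (a := a)) // -mulrA -natrM mulnb /= (inj_eq (@ordS_inj _)) andbb.
Qed.

End UniserialCoefficients.

Section UniserialHom.
Variables (K : fieldType) (n : nat) (Delta : {set 'I_n}).
Variables (M : rep K n) (v : 'I_n) (len : nat).

Definition uhom (x : 'rV[K]_(rdim M)) : 'M[K]_(len, rdim M) :=
  \matrix_(t < len) (x *m pathm M v t).

Variable x : 'rV[K]_(rdim M).
Hypotheses (M_mod : is_mod Delta M) (x_v : x *m re M v = x).
Hypothesis x_len : x *m pathm M v len = 0.

Lemma ubasis_uhom t : ubasis K len t *m uhom x = x *m pathm M v t.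
Proof.
case: (ltnP t len) => [tlen|lent].
  by rewrite -[t in LHS]/(nat_of_ord (Ordinal tlen)) ubasisE -rowE rowK.
by rewrite ubasis_ge // mul0mx -(subnKC lent) pathmD mulmxA x_len mul0mx.
Qed.

Lemma uhom_hom : is_hom (M := uniserial K v len) (uhom x).
Proof.
move=> w; split; apply: ubasis_ext => a; rewrite !mulmxA.
  rewrite ubasis_re -scalemxAl !ubasis_uhom (rv_re M_mod _ (rv_pathm_re M_mod _ x_v)).
  by case: eqP => _; rewrite ?scale1r ?scale0r.
rewrite ubasis_ra -scalemxAl !ubasis_uhom -(re_ra M_mod) mulmxA.
rewrite (rv_re M_mod _ (rv_pathm_re M_mod _ x_v)).
by case: eqP => [<-|_]; rewrite ?scale1r ?pathmS ?mulmxA // scale0r mul0mx.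
Qed.

End UniserialHom.

Section Shift.
Variables (K : fieldType) (len1 len2 s : nat).

Definition shiftmx : 'M[K]_(len1, len2) := \matrix_(a, b) (b == s + a :> nat)%:R.

Lemma shiftmx_ker (r : 'rV[K]_len1) :
  r *m shiftmx = 0 -> forall a : 'I_len1, (s + a < len2)%N -> r 0 a = 0.
Proof.
move=> r0 a sa_lt; have /rowP/(_ (Ordinal sa_lt)) := r0.
rewrite !mxE (bigD1 a) //= big1 => [|c /negbTE ca]; first by rewrite mxE eqxx mulr1 addr0.
by rewrite mxE /= eqn_add2l (inj_eq (@ord_inj _)) [a == _]eq_sym ca mulr0.
Qed.

Hypothesis len2_le : (len2 <= s + len1)%N.

Lemma ubasis_shiftmx t : ubasis K len1 t *m shiftmx = ubasis K len2 (s + t).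
Proof.
case: (ltnP t len1) => [tlen|lent].
  rewrite -[t in LHS]/(nat_of_ord (Ordinal tlen)) ubasisE -rowE.
  by apply/rowP => b; rewrite !mxE.
by rewrite !ubasis_ge ?mul0mx // (leq_trans len2_le) ?leq_add2l.
Qed.

Lemma ubasis_sub_shiftmx t : (s <= t)%N -> (t - s < len1)%N -> (ubasis K len2 t <= shiftmx)%MS.
Proof. by move=> st ts_lt; rewrite -(subnKC st) -ubasis_shiftmx submxMl. Qed.

Lemma shiftmx_hom n (v : 'I_n) :
  is_hom (M := uniserial K (vtx v s) len1) (N := uniserial K v len2) shiftmx.
Proof.
move=> w; split; apply: ubasis_ext => a; rewrite !mulmxA.
  by rewrite ubasis_re -scalemxAl !ubasis_shiftmx ubasis_re vtxD.
by rewrite ubasis_ra -scalemxAl !ubasis_shiftmx ubasis_ra vtxD addnS.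
Qed.

End Shift.

Section ProjectiveUniserial.
Variables (K : fieldType) (n : nat) (Delta : {set 'I_n}).
Hypotheses (n_gt0 : (0 < n)%N) (Delta_neq0 : Delta != set0).

Lemma Pmod_mod v : is_mod Delta (Pmod K Delta v).
Proof. exact: uniserial_mod. Qed.

Lemma Pmod_projective v : projective Delta (Pmod K Delta v).
Proof.
split=> [|M N g f M_mod N_mod g_hom /row_fullP[g' gg'] f_hom]; first exact: Pmod_mod.
set D := dimP Delta v; set x := ubasis K D 0 *m f.
have x_v : x *m re N v = x by rewrite -mulmxA -(proj1 (f_hom v)) mulmxA ubasis_re eqxx scale1r.
set y := x *m g' *m re M v.
have y_v : y *m re M v = y by rewrite -mulmxA (re_idem M_mod).
have yg : y *m g = x by rewrite -mulmxA (proj1 (g_hom v)) mulmxA -(mulmxA x) gg' mulmx1 x_v.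
have y_D : y *m pathm M v D = 0 by rewrite (pathm_zero M_mod (path_zero_dimP _ _ _)) ?mulmx0.
exists (uhom v D y); split; first exact: (uhom_hom M_mod).
apply: ubasis_ext => a; rewrite mulmxA ubasis_uhom // -mulmxA (hom_pathm _ _ g_hom).
rewrite mulmxA yg -mulmxA -(hom_pathm _ _ f_hom) mulmxA.
by have := ubasis_pathm K v D 0 a; rewrite add0n => <-.
Qed.

End ProjectiveUniserial.

Section ZeroModule.
Variables (K : fieldType) (n : nat) (Delta : {set 'I_n}).

Definition zero_rep : rep K n := @Rep K n 0 (fun _ => 0) (fun _ => 0).

Lemma zero_rep_projective : projective Delta zero_rep.
Proof.
split=> [|M N g f _ _ _ _ _]; first by split=> *; rewrite ?flatmx0 //; apply: flatmx0.
by exists 0; split; rewrite ?flatmx0 // => v; rewrite !flatmx0.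
Qed.

End ZeroModule.

Section BlockDiagonal.
Variables (K : fieldType) (m : nat) (p_ : 'I_m -> nat).

Lemma mul_mxdiag (A B : forall j, 'M[K]_(p_ j)) :
  \mxdiag_j A j *m \mxdiag_j B j = \mxdiag_j (A j *m B j).
Proof.
apply/eqP/mulmxP => u; rewrite -(submxrowK u) mulmxA !mul_mxrow_mxdiag.
by apply: eq_mxrow => j; rewrite mulmxA.
Qed.

Lemma submxrow_mul_mxdiag (u : 'rV[K]_(\sum_j p_ j)) (A : forall j, 'M[K]_(p_ j)) j :
  submxrow (u *m \mxdiag_j A j) j = submxrow u j *m A j.
Proof. by rewrite -{1}(submxrowK u) mul_mxrow_mxdiag mxrowK. Qed.

End BlockDiagonal.

Section DirectSum.
Variables (K : fieldType) (n : nat) (Delta : {set 'I_n}).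

Definition dsum m (M : 'I_m -> rep K n) : rep K n :=
  @Rep K n (\sum_j rdim (M j))
    (fun v => \mxdiag_j re (M j) v) (fun v => \mxdiag_j ra (M j) v).

Variables (m : nat) (M : 'I_m -> rep K n).

Lemma dsum_pathm v t : pathm (dsum M) v t = \mxdiag_j pathm (M j) v t.
Proof.
elim: t v => [|t IH] v; first by rewrite mxdiagZ.
by rewrite [LHS]/= IH mul_mxdiag.
Qed.

Lemma dsum_mod : (forall j, is_mod Delta (M j)) -> is_mod Delta (dsum M).
Proof.
move=> M_mod; split.
- by move=> v; rewrite /= mul_mxdiag; apply: eq_mxdiag => j; rewrite (re_idem (M_mod j)).
- move=> v w vw; rewrite /= mul_mxdiag -mxdiag0.
  by apply: eq_mxdiag => j; rewrite (re_orth (M_mod j)).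
- by rewrite /= -mxdiag_sum -mxdiagZ; apply: eq_mxdiag => j; rewrite (re_sum (M_mod j)).
- move=> v; rewrite /= !mul_mxdiag; apply: eq_mxdiag => j.
  by rewrite (re_ra (M_mod j)) (ra_re (M_mod j)).
- move=> lam lamD; rewrite dsum_pathm -mxdiag0.
  by apply: eq_mxdiag => j; case: (M_mod j) => _ _ _ _ ->.
Qed.

Lemma dsum_hom (P : rep K n) (f : forall j, 'M[K]_(rdim (M j), rdim P)) :
  (forall j, is_hom (f j)) -> is_hom (M := dsum M) (\mxcol_j f j).
Proof.
move=> f_hom v; rewrite /= !mul_mxdiag_mxcol !mxcol_mul.
by split; apply: eq_mxcol => j; have [] := f_hom j v.
Qed.

End DirectSum.

Section Powers.
Variables (K : fieldType) (n : nat) (N : rep K n).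

Definition mpow_incl r : 'M[K]_(rdim N, rdim (mpow N r.+1)) :=
  \mxrow_(j < r.+1) (if j == ord0 then 1%:M else 0).

Lemma mpow_incl_hom r : is_hom (mpow_incl r).
Proof.
move=> v; rewrite /= !mul_mxrow_mxdiag !mul_mxrow.
by split; apply: eq_mxrow => j; case: (j == ord0); rewrite ?mul1mx ?mulmx1 ?mul0mx ?mulmx0.
Qed.

Lemma mpow_incl_free r : row_free (mpow_incl r).
Proof.
apply/row_freeP; exists (\mxcol_(j < r.+1) (if j == ord0 then 1%:M else 0 : 'M[K]_(rdim N))).
by rewrite mul_mxrow_mxcol (bigD1 ord0) //= mulmx1 big1 ?addr0 // => j /negbTE ->; rewrite mul0mx.
Qed.

Lemma mpow1_iso : is_iso N (mpow N 1).
Proof.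
exists (mpow_incl 0); split; [exact: mpow_incl_hom | split; first exact: mpow_incl_free].
rewrite -sub1mx; apply/row_subP => r; apply/submxP; exists (submxrow (row r 1%:M) ord0).
rewrite mul_mxrow -[LHS]submxrowK; apply: eq_mxrow => j.
by rewrite (ord1 j) mulmx1.
Qed.

End Powers.

Section ProjectiveShape.
Variables (K : fieldType) (n : nat) (Delta : {set 'I_n}).
Implicit Types (M P : rep K n).

Definition arrow_faithful M := forall u (x : 'rV[K]_(rdim M)),
  x *m re M u = x -> x *m ra M u = 0 -> ordS u \notin Delta -> x = 0.

Definition arrow_exact M := forall v (y : 'rV[K]_(rdim M)) m,
  y *m re M (ordS v) = y -> y *m pathm M (ordS v) m = 0 ->
  (m < dimP Delta (ordS v))%N -> exists q, y = q *m ra M v.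

Definition proj_like M := arrow_faithful M /\ arrow_exact M.

Lemma proj_like_retract M P (s : 'M[K]_(rdim P, rdim M)) (p : 'M[K]_(rdim M, rdim P)) :
  is_hom s -> is_hom p -> s *m p = 1%:M -> proj_like M -> proj_like P.
Proof.
move=> s_hom p_hom sp [M_faithful M_exact]; split.
  move=> u x x_u x_a uD; rewrite -[x]mulmx1 -sp mulmxA (M_faithful u (x *m s)) ?mul0mx //.
    by rewrite -mulmxA -(proj1 (s_hom u)) mulmxA x_u.
  by rewrite -mulmxA -(proj2 (s_hom u)) mulmxA x_a mul0mx.
move=> v y k y_v y_k k_lt.
have [q ysq] : exists q, y *m s = q *m ra M v.
  apply: (M_exact v _ k) => //; first by rewrite -mulmxA -(proj1 (s_hom _)) mulmxA y_v.
  by rewrite -mulmxA -(hom_pathm _ _ s_hom) mulmxA y_k mul0mx.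
exists (q *m p); rewrite -mulmxA -(proj2 (p_hom v)) mulmxA -ysq.
by rewrite -mulmxA sp mulmx1.
Qed.

Lemma dsum_proj_like m (M : 'I_m -> rep K n) :
  (forall j, proj_like (M j)) -> proj_like (dsum M).
Proof.
move=> M_proj; split.
  move=> u x x_u x_a uD; apply/mxrowP => j; rewrite submxrow0.
  apply: (proj1 (M_proj j) u) => //.
    by rewrite -(submxrow_mul_mxdiag _ (fun j => re (M j) u)) [_ *m _]x_u.
  by rewrite -(submxrow_mul_mxdiag _ (fun j => ra (M j) u)) [_ *m _]x_a submxrow0.
move=> v y k y_v y_k k_lt.
have /fin_all_exists[q yq] : forall j, exists q, submxrow y j = q *m ra (M j) v.
  move=> j; apply: (proj2 (M_proj j) v _ k) => //.
    by rewrite -(submxrow_mul_mxdiag _ (fun j => re (M j) (ordS v))) [_ *m _]y_v.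
  by rewrite -(submxrow_mul_mxdiag _ (fun j => pathm (M j) (ordS v) k)) -dsum_pathm y_k submxrow0.
by exists (\mxrow_j q j); apply/mxrowP => j; rewrite submxrow_mul_mxdiag mxrowK.
Qed.

End ProjectiveShape.

Section ProjectiveIsProjLike.
Variables (K : fieldType) (n : nat) (Delta : {set 'I_n}).
Hypotheses (n_gt0 : (0 < n)%N) (Delta_neq0 : Delta != set0).

Lemma Pmod_arrow_faithful v : arrow_faithful Delta (Pmod K Delta v).
Proof.
move=> u x x_u x_a uD; apply/rowP => c; rewrite [RHS]mxE.
have /rowP/(_ c) := x_u; rewrite re_coef.
have [cu _|_ <-] := eqVneq (vtx v c) u; last by rewrite mulr0.
have [c1_lt|] := ltnP c.+1 (dimP Delta v).
  by have /rowP/(_ (Ordinal c1_lt)) := x_a; rewrite (ra_coef _ _ _ (a := c)) // cu eqxx mxE mulr1.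
move=> D_le; have c1E : c.+1 = dimP Delta v by apply/eqP; rewrite eqn_leq D_le ltn_ord.
by move/negP: uD; elim; rewrite -cu -vtxS c1E vtx_dimP_in.
Qed.

Lemma Pmod_arrow_exact v : arrow_exact Delta (Pmod K Delta v).
Proof.
move=> w y [|m] y_w y_m m_lt; first by exists 0; rewrite mul0mx -y_m mulmx1.
set D := dimP Delta v.
have y_coef (a : 'I_D) : y 0 a = y 0 a * (vtx v a == ordS w)%:R by rewrite -re_coef y_w.
have y0 (a : 'I_D) : a = 0%N :> nat -> y 0 a = 0.
  move=> a0; have va : vtx v a = v by rewrite a0.
  rewrite y_coef va; have [vw|_] := eqVneq v (ordS w); last by rewrite mulr0.
  have m_lt' : (m.+1 < D)%N by rewrite /D vw.
  have /rowP/(_ (Ordinal m_lt')) := y_m.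
  by rewrite (pathm_coef _ _ _ (a := a)) /= ?a0 // -vw eqxx mxE.
exists (\sum_(a < D) y 0 a *: ubasis K D a.-1).
rewrite {1}(rv_ubasis y) mulmx_suml; apply: eq_bigr => a _; rewrite -scalemxAl.
have [a0|a_gt0] := posnP a; first by rewrite y0 // !scale0r.
have va : vtx v a = ordS (vtx v a.-1) by rewrite -vtxS prednK.
by rewrite ubasis_ra prednK // scalerA [in LHS]y_coef va (inj_eq (@ordS_inj _)).
Qed.

Lemma Pmod_proj_like v : proj_like Delta (Pmod K Delta v).
Proof. by split; [apply: Pmod_arrow_faithful | apply: Pmod_arrow_exact]. Qed.

(* P is a retract of the sum, over the basis vectors x of P and the vertices w, of P_w mapped to P
   by b_0 |-> x e_w. *)
Lemma projective_proj_like (P : rep K n) : projective Delta P -> proj_like Delta P.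
Proof.
case=> P_mod P_lift.
pose idx : 'I_#|{: 'I_(rdim P) * 'I_n}| -> 'I_(rdim P) * 'I_n := enum_val.
pose M j := Pmod K Delta (idx j).2.
pose x j : 'rV[K]_(rdim P) := delta_mx 0 (idx j).1 *m re P (idx j).2.
pose f j : 'M_(rdim (M j), rdim P) := uhom (idx j).2 (dimP Delta (idx j).2) (x j).
have x_v j : x j *m re P (idx j).2 = x j by rewrite -mulmxA (re_idem P_mod).
have x_D j : x j *m pathm P (idx j).2 (dimP Delta (idx j).2) = 0.
  by rewrite (pathm_zero P_mod (path_zero_dimP _ _ _)) ?mulmx0.
have f_hom j : is_hom (f j) := uhom_hom P_mod (x_v j) (x_D j).
have f_full : row_full (\mxcol_j f j).
  rewrite -sub1mx eqmx_col; apply/row_subP => r; rewrite row1.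
  rewrite -[delta_mx _ _]mulmx1 -(re_sum P_mod) mulmx_sumr; apply/summx_sub => w _.
  set j := enum_rank (r, w); apply: (sumsmx_sup j) => //; rewrite genmxE.
  have -> : delta_mx 0 r *m re P w = ubasis K _ 0 *m f j.
    by rewrite (ubasis_uhom (x_D j)) mulmx1 /x /idx enum_rankK.
  exact: submxMl.
have id_hom : is_hom (M := P) (N := P) 1%:M by move=> v; rewrite !mul1mx !mulmx1.
have [s [s_hom sf]] := P_lift _ _ _ _ (dsum_mod (fun j => Pmod_mod K n_gt0 Delta_neq0 _)) P_mod
  (dsum_hom f_hom) f_full id_hom.
exact: proj_like_retract s_hom (dsum_hom f_hom) sf (dsum_proj_like (fun j => Pmod_proj_like _)).
Qed.

End ProjectiveIsProjLike.

Section ArrowReflectsImage.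
Variables (K : fieldType) (n : nat) (Delta : {set 'I_n}).
Variables (Q X : rep K n) (d : 'M[K]_(rdim Q, rdim X)).
Hypotheses (Q_mod : is_mod Delta Q) (X_mod : is_mod Delta X) (d_hom : is_hom d).
Hypothesis d_inj : forall q : 'rV[K]_(rdim Q), q *m d = 0 -> q = 0.
Hypotheses (Q_exact : arrow_exact Delta Q) (X_faithful : arrow_faithful Delta X).

(* u alpha_v = q d with q killed by a short path, so q = r alpha_v by exactness of Q; then
   u - r d is killed by alpha_v, hence zero by faithfulness of X. *)
Lemma arrow_reflects_image v (u : 'rV[K]_(rdim X)) m :
  u *m re X v = u -> (u *m ra X v <= d)%MS -> u *m ra X v *m pathm X (ordS v) m = 0 ->
  (m < dimP Delta (ordS v))%N -> ordS v \notin Delta -> (u <= d)%MS.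
Proof.
move=> u_v /submxP[q0 uq0] u_m m_lt vD.
set q := q0 *m re Q (ordS v).
have qd : q *m d = u *m ra X v.
  by rewrite -mulmxA (proj1 (d_hom _)) mulmxA -uq0 -mulmxA (ra_re X_mod).
have q_v : q *m re Q (ordS v) = q by rewrite -mulmxA (re_idem Q_mod).
have q_m : q *m pathm Q (ordS v) m = 0.
  by apply: d_inj; rewrite -mulmxA (hom_pathm _ _ d_hom) mulmxA qd u_m.
have [q' qE] := Q_exact q_v q_m m_lt.
set r := q' *m re Q v.
have rd_v : r *m d *m re X v = r *m d.
  by rewrite -mulmxA -(proj1 (d_hom v)) mulmxA /r -(mulmxA q') (re_idem Q_mod).
have rd_a : r *m d *m ra X v = q *m d.
  by rewrite -mulmxA -(proj2 (d_hom v)) mulmxA /r -(mulmxA q') (re_ra Q_mod) -qE.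
have : u - r *m d = 0.
  apply: X_faithful vD; first by rewrite mulmxBl u_v rd_v.
  by rewrite mulmxBl rd_a qd subrr.
by move/eqP; rewrite subr_eq0 => /eqP ->; apply: submxMl.
Qed.

End ArrowReflectsImage.

Section Homology.
Variables (K : fieldType) (n : nat) (Delta : {set 'I_n}).
Variables (C : cplx K n) (h : nat).
Hypothesis C_proj : proj_complex Delta C.
Local Notation X := (cm C h).
Local Notation Z := (cycles C h).

Lemma cycles_re_ra (z : 'rV[K]_(rdim X)) v :
  (z <= Z)%MS -> (z *m re X v <= Z)%MS /\ (z *m ra X v <= Z)%MS.
Proof.
rewrite /cycles; case: h z => [|s] z; first by rewrite !submx1.
have [_ /(_ s) d_hom _] := C_proj.
rewrite !sub_kermx => /eqP z_ker.
by rewrite -!mulmxA (proj1 (d_hom v)) (proj2 (d_hom v)) !mulmxA z_ker !mul0mx.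
Qed.

Lemma cycles_pathm (z : 'rV[K]_(rdim X)) v t : (z <= Z)%MS -> (z *m pathm X v t <= Z)%MS.
Proof.
elim: t z v => [|t IH] z v z_Z; first by rewrite mulmx1.
by rewrite [pathm _ _ _]/= mulmxA; apply: IH; case: (cycles_re_ra v z_Z).
Qed.

Variables (N : rep K n) (G : 'M[K]_(rdim X, rdim N)).
Hypothesis G_hom : forall z : 'rV[K]_(rdim X), (z <= Z)%MS ->
  forall v, z *m re X v *m G = z *m G *m re N v /\ z *m ra X v *m G = z *m G *m ra N v.

Lemma cycles_pathm_map (z : 'rV[K]_(rdim X)) v t :
  (z <= Z)%MS -> z *m pathm X v t *m G = z *m G *m pathm N v t.
Proof.
elim: t z v => [|t IH] z v z_Z; first by rewrite !mulmx1.
rewrite [pathm X _ _]/= [pathm N _ _]/= mulmxA IH; last by case: (cycles_re_ra v z_Z).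
by rewrite (proj2 (G_hom z_Z v)) mulmxA.
Qed.

Lemma homology_lift (e : 'rV[K]_(rdim N)) v : row_full (Z *m G) -> e *m re N v = e ->
  exists z, [/\ (z <= Z)%MS, z *m re X v = z & z *m G = e].
Proof.
case/row_fullP => B GB e_v; set z := e *m B *m Z.
have z_Z : (z <= Z)%MS by apply: submxMl.
have zG : z *m G = e by rewrite -!mulmxA GB mulmx1.
exists (z *m re X v); split; first by case: (cycles_re_ra v z_Z).
  by case: C_proj => /(_ h) [X_mod _] _ _; rewrite -mulmxA (re_idem X_mod).
by rewrite (proj1 (G_hom z_Z v)) zG.
Qed.

End Homology.

Section HomologyTransfer.
Variables (K : fieldType) (n : nat) (N : rep K n) (C : cplx K n) (t : nat).

Lemma homology_iso_trans N' : homology_iso C t N -> is_iso N N' -> homology_iso C t N'.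
Proof.
case=> G [G_hom /row_fullP[B GB] G_ker] [F [F_hom [F_free F_full]]].
exists (G *m F); split.
- move=> z z_Z v; rewrite !mulmxA (proj1 (G_hom z z_Z v)) (proj2 (G_hom z z_Z v)).
  by rewrite -!mulmxA (proj1 (F_hom v)) (proj2 (F_hom v)).
- case/row_fullP: F_full => F'' F''F; apply/row_fullP; exists (F'' *m B).
  have -> : F'' *m B *m (cycles C t *m (G *m F)) = F'' *m (B *m (cycles C t *m G)) *m F.
    by rewrite !mulmxA.
  by rewrite GB mulmx1 F''F.
- by move=> z z_Z; rewrite mulmxA (mulmx_free_eq0 _ F_free) G_ker.
Qed.

Lemma homology_iso_mpow0 : homology_iso C t (mpow N 0) <-> ~ homology_nonzero C t.
Proof.
rewrite /homology_nonzero; split.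
  case=> G [_ _ G_ker]; apply/negP; rewrite negbK; apply/row_subP => j.
  by rewrite -G_ker ?row_sub // -mxrank_eq0 -leqn0 (leq_trans (rank_leq_col _)) //= big_ord0.
move/negP; rewrite negbK => Z_B; exists 0; split.
- by move=> z _ v; rewrite !mulmx0 !mul0mx.
- by rewrite /row_full mulmx0 mxrank0 /= big_ord0.
- by move=> z z_Z; rewrite mulmx0 eqxx (submx_trans z_Z Z_B).
Qed.

End HomologyTransfer.

Lemma top_differential_inj (K : fieldType) (n : nat) (C : cplx K n) h :
  rdim (cm C h.+2) = 0%N -> ~ homology_nonzero C h.+1 ->
  forall q : 'rV[K]_(rdim (cm C h.+1)), q *m cd C h = 0 -> q = 0.
Proof.
move=> C_h2 H_h1 q qd.
have d0 : cd C h.+1 = 0.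
  by apply/eqP; rewrite -mxrank_eq0 -leqn0 -C_h2 rank_leq_row.
move/negP: H_h1; rewrite negbK /bounds d0 /cycles => ker0.
by apply: submx0null (submx_trans _ ker0); rewrite sub_kermx qd.
Qed.

Section LowerBound.
Variables (K : fieldType) (n : nat) (Delta : {set 'I_n}).
Hypotheses (n_gt0 : (0 < n)%N) (Delta_neq0 : Delta != set0).
Variables (i : 'I_n) (k : nat).
Hypothesis k_range : (n <= k < dimP Delta i)%N.

Lemma top_homology_pathm (C : cplx K n) h (N : rep K n) (e : 'rV[K]_(rdim N)) :
  proj_complex Delta C -> rdim (cm C h.+2) = 0%N -> ~ homology_nonzero C h.+1 ->
  homology_iso C h N -> e *m re N i = e -> e *m pathm N i k = 0 -> e *m pathm N i k.-1 = 0.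
Proof.
move=> C_proj C_h2 H_h1 [G [G_hom G_full G_ker]] e_i e_k.
have [/(_ h) X_proj /(_ h) d_hom _] := C_proj; have [/(_ h.+1) Q_proj _ _] := C_proj.
have [X_mod _] := X_proj; have [Q_mod _] := Q_proj.
have [z [z_Z z_i zG]] := homology_lift C_proj G_hom G_full e_i.
have kE : k = k.-1.+1 by rewrite prednK //; lia.
set v := vtx i k.-1; set u := z *m pathm (cm C h) i k.-1.
have ua : u *m ra (cm C h) v = z *m pathm (cm C h) i k by rewrite kE pathmS mulmxA.
have vS : ordS v = vtx i k by rewrite kE.
have uG : u *m G = e *m pathm N i k.-1.
  by rewrite (cycles_pathm_map C_proj G_hom) // zG.
suff : (u <= bounds C h)%MS by rewrite -G_ker ?(cycles_pathm C_proj) // uG => /eqP.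
apply: (arrow_reflects_image Q_mod X_mod d_hom (top_differential_inj C_h2 H_h1)
          (proj2 (projective_proj_like n_gt0 Delta_neq0 Q_proj))
          (proj1 (projective_proj_like n_gt0 Delta_neq0 X_proj)) (m := dimP Delta i - k)).
- exact: (rv_pathm_re X_mod _ z_i).
- by rewrite ua -G_ker ?(cycles_pathm C_proj) // (cycles_pathm_map C_proj G_hom) // zG e_k.
- rewrite ua vS -mulmxA -pathmD subnKC; last by case/andP: k_range => _ /ltnW.
  by rewrite (pathm_zero X_mod (path_zero_dimP _ _ _)) ?mulmx0.
- by rewrite vS dimP_vtx //; lia.
- by rewrite vS vtx_notin_Delta.
Qed.

End LowerBound.

Section Resolution.
Variables (K : fieldType) (n : nat) (Delta : {set 'I_n}).
Hypotheses (n_gt0 : (0 < n)%N) (Delta_neq0 : Delta != set0).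
Variables (i : 'I_n) (k : nat).
Hypothesis k_range : (n <= k < dimP Delta i)%N.
Local Notation l := (dimP Delta i).
Local Notation u := (vtx i k).
Local Notation w := (vtx u (l - k)).

Lemma dimP_u : dimP Delta u = (l - k + n)%N.
Proof. exact: dimP_vtx. Qed.

Lemma dimP_w : dimP Delta w = n.
Proof. by rewrite -vtxD subnKC ?dimP_vtx_dimP //; case/andP: k_range => _ /ltnW. Qed.

Definition res_mod (t : nat) : rep K n :=
  match t with
  | 0 => Pmod K Delta i
  | 1 => Pmod K Delta u
  | 2 => Pmod K Delta w
  | _ => zero_rep K n
  end.

Definition res_diff (t : nat) : 'M[K]_(rdim (res_mod t.+1), rdim (res_mod t)) :=
  match t with
  | 0 => shiftmx K _ _ k
  | 1 => shiftmx K _ _ (l - k)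
  | _ => 0
  end.

Definition resolution : cplx K n := Cplx res_diff.

Local Notation d0 := (shiftmx K (dimP Delta u) l k).
Local Notation d1 := (shiftmx K (dimP Delta w) (dimP Delta u) (l - k)).
Local Notation aug := (shiftmx K l k 0).

Lemma d0_len : (l <= k + dimP Delta u)%N.
Proof. by rewrite dimP_u; lia. Qed.

Lemma d1_len : (dimP Delta u <= l - k + dimP Delta w)%N.
Proof. by rewrite dimP_u dimP_w. Qed.

Lemma aug_len : (k <= 0 + l)%N.
Proof. by case/andP: k_range => _ /ltnW. Qed.

Lemma resolution_proj : proj_complex Delta resolution.
Proof.
split.
- case=> [|[|[|t]]] /=; try exact: Pmod_projective n_gt0 Delta_neq0 _.
  exact: zero_rep_projective.
- case=> [|[|t]]; [exact: (shiftmx_hom K d0_len i) | exact: (shiftmx_hom K d1_len u) |].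
  by move=> v; rewrite !mulmx0 !mul0mx.
- case=> [|[|t]] /=; rewrite ?mul0mx //.
  apply: ubasis_ext => a; rewrite mulmxA (ubasis_shiftmx K d1_len) (ubasis_shiftmx K d0_len).
  by rewrite mulmx0 ubasis_ge //; lia.
Qed.

Lemma d0_aug : d0 *m aug = 0.
Proof.
apply: ubasis_ext => a; rewrite mulmxA (ubasis_shiftmx K d0_len) (ubasis_shiftmx K aug_len).
by rewrite mulmx0 ubasis_ge // add0n leq_addr.
Qed.

Lemma aug_ker (z : 'rV[K]_l) : (z *m aug == 0) = (z <= d0)%MS.
Proof.
apply/eqP/idP => [z0|/submxP[r ->]]; last by rewrite -mulmxA d0_aug mulmx0.
rewrite (rv_ubasis z); apply/summx_sub => a _.
have [a_lt|ka] := ltnP a k; first by rewrite (shiftmx_ker z0) ?scale0r ?sub0mx.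
by rewrite scalemx_sub // (ubasis_sub_shiftmx K d0_len) // dimP_u; have := ltn_ord a; lia.
Qed.

Lemma ker_d0 : (kermx d0 <= d1)%MS.
Proof.
apply/row_subP => j; set r := row j _; have r0 : r *m d0 = 0 by apply/sub_kermxP; apply: row_sub.
rewrite (rv_ubasis r); apply/summx_sub => a _.
have [a_lt|ka] := ltnP (k + a) l; first by rewrite (shiftmx_ker r0) ?scale0r ?sub0mx.
rewrite scalemx_sub // (ubasis_sub_shiftmx K d1_len) ?dimP_w //; first lia.
by have := ltn_ord a; have := dimP_u; lia.
Qed.

Lemma d1_inj (r : 'rV[K]_(dimP Delta w)) : r *m d1 = 0 -> r = 0.
Proof.
move=> r0; apply/rowP => a; rewrite mxE (shiftmx_ker r0) // dimP_u.
by have := ltn_ord a; have := dimP_w; lia.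
Qed.

Lemma resolution_exact t : (0 < t)%N -> (cycles resolution t <= bounds resolution t)%MS.
Proof.
case: t => [//|[|[|t]]] _ /=; first exact: ker_d0; last by rewrite flatmx0 sub0mx.
apply/row_subP => j; have r0 : row j (kermx d1) *m d1 = 0 by apply/sub_kermxP; apply: row_sub.
by rewrite (d1_inj r0) sub0mx.
Qed.

Lemma resolution_homology0 : homology_iso resolution 0 (Lmod K i k).
Proof.
exists aug; split => /=.
- by move=> z _ v; rewrite -!mulmxA; have [-> ->] := shiftmx_hom K aug_len i v.
- rewrite mul1mx -sub1mx; apply/row_subP => a; rewrite row1 -ubasisE.
  by rewrite -[nat_of_ord a]add0n -(ubasis_shiftmx K aug_len) submxMl.
- by move=> z _; apply: aug_ker.
Qed.

Lemma resolution_homology0_nonzero : homology_nonzero resolution 0.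
Proof.
apply/negP => /= /(submx_trans (submx1 (ubasis K l 0))).
rewrite -aug_ker -[0%N]/(0 + 0)%N (ubasis_shiftmx K aug_len) (negbTE (ubasis_neq0 _ _)) //.
by case/andP: k_range => nk _; lia.
Qed.

Lemma resolution_sup : is_sup resolution 2.
Proof. by split=> [|[|[|[|t]]]] //=; rewrite dimP_w -lt0n. Qed.

End Resolution.

Section Truncations.
Variables (K : fieldType) (n : nat) (Delta : {set 'I_n}).
Hypotheses (n_gt0 : (0 < n)%N) (Delta_neq0 : Delta != set0).

Lemma loewy_length_Pmod v l : loewy_length (Pmod K Delta v) l -> l = dimP Delta v.
Proof.
have D_gt0 := dimP_gt0 n_gt0 Delta_neq0 v.
case=> l_gt0 l_zero l_min; case: (ltngtP l (dimP Delta v)) => [lD|Dl|//].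
  have /(congr1 (mulmx (ubasis K _ 0))) := l_zero v; rewrite mulmx0.
  have := ubasis_pathm K v _ 0 l; rewrite add0n => /= -> /eqP.
  by rewrite (negbTE (ubasis_neq0 _ _)).
have [w /eqP[]] : exists w, pathm (Pmod K Delta v) w (dimP Delta v) != 0.
  by apply: l_min; rewrite D_gt0.
apply: ubasis_ext => a; rewrite mulmx0 -(prednK D_gt0).
have [->|wa] := eqVneq w (vtx v a); last exact: ubasis_pathm_ne.
by rewrite ubasis_pathm prednK // ubasis_ge // leq_addl.
Qed.

Variables (i : 'I_n) (k : nat).
Hypothesis k_range : (n <= k < dimP Delta i)%N.
Local Notation L := (Lmod K i k).

Lemma Lmod_homology_tail (C : cplx K n) h r :
  proj_complex Delta C -> homology_iso C h (mpow L r.+1) ->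
  rdim (cm C h.+2) = 0%N -> ~ homology_nonzero C h.+1 -> False.
Proof.
move=> C_proj H_h C_h2 H_h1; set x := ubasis K k 0; set e := x *m mpow_incl L r.
have incl_hom := mpow_incl_hom L r.
have x_pathm t : x *m pathm L i t = ubasis K k t by have := ubasis_pathm K i k 0 t.
have e_pathm t : e *m pathm (mpow L r.+1) i t = ubasis K k t *m mpow_incl L r.
  by rewrite -mulmxA -(hom_pathm _ _ incl_hom) mulmxA x_pathm.
have e_i : e *m re (mpow L r.+1) i = e.
  by rewrite -mulmxA -(proj1 (incl_hom i)) mulmxA ubasis_re eqxx scale1r.
have e_k : e *m pathm (mpow L r.+1) i k = 0 by rewrite e_pathm ubasis_ge ?mul0mx.
have /eqP := top_homology_pathm n_gt0 Delta_neq0 k_range C_proj C_h2 H_h1 H_h e_i e_k.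
rewrite e_pathm (mulmx_free_eq0 _ (mpow_incl_free L r)).
by apply/negP/ubasis_neq0; rewrite ltn_predL; lia.
Qed.

Local Notation res := (resolution K Delta i k).
Let res_proj := resolution_proj K n_gt0 Delta_neq0 k_range.
Let res_sup := resolution_sup K n_gt0 Delta_neq0 k_range.
Let res_H0 := resolution_homology0 K n_gt0 Delta_neq0 k_range.
Let res_H0_nz := resolution_homology0_nonzero K n_gt0 Delta_neq0 k_range.

Let res_exact t : (0 < t)%N -> ~ homology_nonzero res t.
Proof. by move=> t_gt0; apply/negP; rewrite negbK; apply: resolution_exact. Qed.

Lemma Lmod_qpd : qpd_is Delta L 2.
Proof.
split.
  exists res; split.
    split; [exact: res_proj | by exists 2%N; exact: res_sup |].
    exists (fun t => if t is 0 then 1%N else 0%N); split; last by exists 0%N.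
    case=> [|t]; last by apply/homology_iso_mpow0/res_exact.
    exact: homology_iso_trans res_H0 (mpow1_iso _).
  by exists 2%N, 0%N; split; [exact: res_sup | split; [exact: res_H0_nz | exact: res_exact] |].
move=> g [C [[C_proj _ [nj [C_H _]]] [s [h [[_ C_sup] [H_h H_above] ghs]]]]].
rewrite leqNgt; apply/negP => g_lt2.
have C_h2 : rdim (cm C h.+2) = 0%N by apply: C_sup; lia.
have := C_H h; case: (nj h) => [/homology_iso_mpow0 H_h0|r C_Hh]; first exact: H_h0 H_h.
exact: Lmod_homology_tail C_proj C_Hh C_h2 (H_above _ (ltnSn h)).
Qed.

Lemma Lmod_pd : pd_is Delta L 2.
Proof.
split.
  by exists res; split; [exact: res_proj | exact: res_H0 | exact: res_exact | case=> [|[|[|t]]]].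
move=> L' [C [C_proj C_H0 C_H C_sup]]; rewrite leqNgt; apply/negP => L'_lt2.
have C_H0' := homology_iso_trans C_H0 (mpow1_iso L).
by apply: (Lmod_homology_tail C_proj C_H0'); [apply: C_sup; lia | apply: C_H].
Qed.

End Truncations.

Theorem lemma4p10 (K : fieldType) (n : nat) (Delta : {set 'I_n})
    (i : 'I_n) (k l : nat) :
  (2 <= n)%N -> Delta != set0 ->
  @loewy_length K n (@Pmod K n Delta i) l ->
  (n <= k < l)%N ->
  @qpd_is K n Delta (@Lmod K n i k) 2 /\ @pd_is K n Delta (@Lmod K n i k) 2.
Proof.
move=> /ltnW n_gt0 Delta_neq0 /(loewy_length_Pmod n_gt0 Delta_neq0) -> k_range.
exact: conj (Lmod_qpd K n_gt0 Delta_neq0 k_range) (Lmod_pd K n_gt0 Delta_neq0 k_range).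
Qed.
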